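(* For every integer $n\ge 5$ there exists a smooth complete toric threefold of Picard number $n$ all of whose nef line bundles are trivial.
   Context: A line bundle $L$ on a complete variety $X$ is nef if $\deg(L|_C)\ge0$ for every curve $C\subset X$; trivial means $L\cong\mathcal{O}_X$. The Picard number is the rank of the Picard group. *)

(* Smooth complete toric threefolds are encoded by their fans
   (the standard toric dictionary). *)
From HB Require Import structures.
From mathcomp Require Import all_boot all_order all_algebra.
Set Implicit Arguments. Unset Strict Implicit. Unset Printing Implicit Defensive.
Import Order.TTheory GRing.Theory Num.Theory.
Local Open Scope ring_scope.

(* A fan in N_R = R^3 with N rays; ray t has primitive generator v t : Z^3. *)
Definition vecQ (N : nat) (v : 'I_N -> 'I_3 -> int) (t : 'I_N) : 'cV[rat]_3 :=
  \col_r ((v t r)%:~R).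

Definition tri (N : nat) (i j k : 'I_N) (s : 'I_3) : 'I_N :=
  match val s with 0 => i | 1 => j | _ => k end.
Definition mx3 (N : nat) (v : 'I_N -> 'I_3 -> int) (i j k : 'I_N) : 'M[int]_3 :=
  \matrix_(r < 3, s < 3) v (tri i j k s) r.

Definition in_cone (N : nat) (v : 'I_N -> 'I_3 -> int) (S : {set 'I_N})
    (x : 'cV[rat]_3) : Prop :=
  exists lam : 'I_N -> rat,
    (forall t, 0 <= lam t) /\ (forall t, t \notin S -> lam t = 0) /\
    x = \sum_t lam t *: vecQ v t.

(* C = the set of maximal (3-dimensional) cones, each given by its rays. *)
Definition smooth_complete_fan (N : nat) (v : 'I_N -> 'I_3 -> int)
    (C : {set {set 'I_N}}) : Prop :=
  [/\ injective v,
      (* smooth: every maximal cone is generated by a Z-basis of Z^3 *)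
      (forall c, c \in C -> exists i j k : 'I_N,
          c = [set i; j; k] /\ (\det (mx3 v i j k) = 1 \/ \det (mx3 v i j k) = -1)),
      (forall t, exists c, c \in C /\ t \in c),
      (* fan: two cones meet along a common face *)
      (forall c c', c \in C -> c' \in C -> forall x,
          in_cone v c x -> in_cone v c' x -> in_cone v (c :&: c') x)
    &
      (forall x, exists c, c \in C /\ in_cone v c x)].

(* Picard number = rank of Pic(X) = rank of Z^N / M (M = Z^3 via m |-> (<m,v_t>)_t) *)
Definition rayMatrix (N : nat) (v : 'I_N -> 'I_3 -> int) : 'M[rat]_(3, N) :=
  \matrix_(r < 3, t < N) ((v t r)%:~R).
Definition picard_number (N : nat) (v : 'I_N -> 'I_3 -> int) : nat :=
  (N - \rank (rayMatrix v))%N.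

(* A line bundle is represented by a T-invariant divisor  sum_t a t D_t.
   Its degree on the invariant curve V(tau), tau = cone(v_i,v_j) = sigma /\ sigma',
   sigma = cone(v_i,v_j,v_k), sigma' = cone(v_i,v_j,v_l), is
   a_k + a_l + alpha a_i + beta a_j  where v_k + v_l + alpha v_i + beta v_j = 0. *)
Definition nef (N : nat) (v : 'I_N -> 'I_3 -> int) (C : {set {set 'I_N}})
    (a : 'I_N -> int) : Prop :=
  forall c c', c \in C -> c' \in C ->
  forall i j k l : 'I_N,
    i \in c -> i \in c' -> j \in c -> j \in c' -> i != j ->
    k \in c -> k \notin c' -> l \in c' -> l \notin c ->
  forall alpha beta : rat,
    vecQ v k + vecQ v l + alpha *: vecQ v i + beta *: vecQ v j = 0 ->
    0 <= (a k)%:~R + (a l)%:~R + alpha * (a i)%:~R + beta * (a j)%:~R.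

(* O(D) is trivial iff D is principal: D = div(chi^m) *)
Definition trivial_bundle (N : nat) (v : 'I_N -> 'I_3 -> int) (a : 'I_N -> int) : Prop :=
  exists m : 'I_3 -> int, forall t, a t = \sum_(r < 3) m r * v t r.

From mathcomp Require Import all_boot all_order all_algebra.
From mathcomp Require Import ring lra zify.
Set Implicit Arguments. Unset Strict Implicit. Unset Printing Implicit Defensive.
Import Order.TTheory GRing.Theory Num.Theory.
Local Open Scope ring_scope.

(** The induction starts from an explicit smooth complete fan with eight rays and
    twelve maximal cones, so of Picard number 5; its eighteen walls give degree
    inequalities that force every nef divisor to be principal.  The
    induction step blows up the torus-fixed point of a unimodular maximal cone
    sigma = <v_i, v_j, v_k>, i.e. star-subdivides sigma at rho = v_i + v_j + v_k;
    this keeps the fan smooth and complete and raises the Picard number by one.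
    A nef divisor upstairs restricts to a nef divisor downstairs (the degree on an
    old curve through the blown-up point is the sum of the degrees on its strict
    transform and on an exceptional line), hence is principal there, say div(chi^m).
    Its coefficient at rho is then squeezed to <m, rho> by the exceptional line
    V(v_i, rho) from above and, from below, by the strict transform of the curve
    V(v_i, v_j) shared with a neighbouring cone <v_i, v_j, v_l>.  The new cone
    <v_i, v_j, rho> and that neighbour form the same configuration for the next
    step. *)

Definition r0 : 'I_3 := @Ordinal 3 0 isT.
Definition r1 : 'I_3 := @Ordinal 3 1 isT.
Definition r2 : 'I_3 := @Ordinal 3 2 isT.

Lemma ord3P (P : 'I_3 -> Prop) : P r0 -> P r1 -> P r2 -> forall s, P s.
Proof. by move=> P0 P1 P2 [[|[|[|//]]] lt_s3]; rewrite (bool_irrelevance lt_s3 isT). Qed.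

Lemma sum3 (R : nmodType) (F : 'I_3 -> R) : \sum_(s < 3) F s = F r0 + F r1 + F r2.
Proof. by rewrite !big_ord_recl big_ord0 addr0 addrA; congr (F _ + F _ + F _); apply: val_inj. Qed.

Lemma set3E (T : finType) (a b c : T) : [set a; b; c] = a |: (b |: [set c]).
Proof. by apply/setP => x; rewrite !inE orbA. Qed.

Lemma card_set3 (T : finType) (a b c : T) :
  a != b -> a != c -> b != c -> #|[set a; b; c]| = 3%N.
Proof. by move=> ab ac bc; rewrite set3E !cardsU1 cards1 !inE negb_or ab ac bc. Qed.

Lemma big_set3 (T : finType) (M : nmodType) (F : T -> M) (a b c : T) :
  a != b -> a != c -> b != c -> \sum_(t in [set a; b; c]) F t = F a + F b + F c.
Proof.
move=> ab ac bc; rewrite set3E big_setU1 ?big_setU1 ?big_set1 /= ?addrA // !inE.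
  by rewrite bc.
by rewrite negb_or ab ac.
Qed.

Lemma sum_set3 (T : finType) (M : nmodType) (F : T -> M) (i j k : T) :
  i != j -> i != k -> j != k -> (forall t, t \notin [set i; j; k] -> F t = 0) ->
  \sum_t F t = F i + F j + F k.
Proof.
move=> ij ik jk F0; rewrite (bigD1 i) // (bigD1 j) 1?eq_sym // (bigD1 k) /=; last first.
  by rewrite eq_sym ik eq_sym jk.
rewrite big1 ?addr0 ?addrA // => t /andP[/andP[ti tj] tk].
by apply: F0; rewrite !inE !negb_or ti tj tk.
Qed.

Lemma set3_perm (T : finType) (a b c a' b' c' : T) :
  perm_eq [:: a; b; c] [:: a'; b'; c'] -> [set a; b; c] = [set a'; b'; c'].
Proof. move/perm_mem => eq_abc; apply/setP => t; have := eq_abc t; by rewrite !inE !orbA. Qed.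

(** * Determinants of 3 x 3 matrices *)

Section Det3.
Variable R : comNzRingType.
Implicit Types a b c : 'I_3 -> R.

Definition det3 a b c : R :=
  a r0 * (b r1 * c r2 - b r2 * c r1) + a r1 * (b r2 * c r0 - b r0 * c r2)
  + a r2 * (b r0 * c r1 - b r1 * c r0).

Lemma det3_cols (f : 'I_3 -> 'I_3 -> R) :
  \det (\matrix_(r, s) f s r) = det3 (f r0) (f r1) (f r2).
Proof.
rewrite (expand_det_col _ r0) sum3 /cofactor !(expand_det_col _ ord0).
rewrite !big_ord_recl big_ord0 /cofactor !det_mx11 !mxE !big_ord0 /det3.
set g := fun m n : nat => f (inord m) (inord n).
have fg (m n : 'I_3) : f m n = g m n by rewrite /g !inord_val.
by rewrite !fg /=; ring.
Qed.

Lemma det3_indep (l m n : R) a b c :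
  GRing.lreg (det3 a b c) -> (forall s, l * a s + m * b s + n * c s = 0) ->
  [/\ l = 0, m = 0 & n = 0].
Proof.
move=> regD comb0; pose u s := l * a s + m * b s + n * c s.
have u0 s : u s = 0 by apply: comb0.
split; apply: regD; rewrite mulr0.
- by transitivity (det3 u b c); [rewrite /u /det3; ring | rewrite /det3 !u0; ring].
- by transitivity (det3 a u c); [rewrite /u /det3; ring | rewrite /det3 !u0; ring].
- by transitivity (det3 a b u); [rewrite /u /det3; ring | rewrite /det3 !u0; ring].
Qed.

End Det3.

Lemma det3_map (R S : comNzRingType) (f : {rmorphism R -> S}) (a b c : 'I_3 -> R) :
  f (det3 a b c) = det3 (f \o a) (f \o b) (f \o c).
Proof. by rewrite /det3 !(rmorphD, rmorphN, rmorphM). Qed.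

Lemma cramer3 (K : fieldType) (a b c x : 'I_3 -> K) : det3 a b c != 0 -> forall s,
  x s = det3 x b c / det3 a b c * a s + det3 a x c / det3 a b c * b s
        + det3 a b x / det3 a b c * c s.
Proof. by rewrite /det3 => D0; apply: ord3P; field. Qed.

Definition dot3 (R : nzRingType) (m u : 'I_3 -> R) : R :=
  m r0 * u r0 + m r1 * u r1 + m r2 * u r2.

Lemma det3_intr (a b c : 'I_3 -> int) :
  det3 (intr \o a) (intr \o b) (intr \o c) = (det3 a b c)%:~R :> rat.
Proof. by rewrite det3_map. Qed.

(** * Simplicial cones *)

Section Cones.
Variables (N : nat) (v : 'I_N -> 'I_3 -> int).
Implicit Types (S T c d : {set 'I_N}) (lam mu : 'I_N -> rat) (x : 'cV[rat]_3).

Definition vq t : 'I_3 -> rat := intr \o v t.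

Definition supported lam S := forall t, t \notin S -> lam t = 0.

Definition comb lam : 'cV[rat]_3 := \sum_t lam t *: vecQ v t.

Lemma combE lam s : comb lam s 0 = \sum_t lam t * vq t s.
Proof. by rewrite summxE; apply: eq_bigr => t _; rewrite !mxE. Qed.

Lemma in_cone_ray S t : t \in S -> in_cone v S (vecQ v t).
Proof.
move=> tS; exists (fun u => (u == t)%:R); split=> [u|]; first by case: eqP.
split=> [u uS|]; first by case: eqP => // eq_ut; rewrite eq_ut tS in uS.
rewrite (bigD1 t) //= eqxx scale1r big1 ?addr0 // => u /negbTE ->.
by rewrite scale0r.
Qed.

Lemma det_mx3 i j k : \det (mx3 v i j k) = det3 (v i) (v j) (v k).
Proof. exact: det3_cols. Qed.

Lemma lreg_det3 i j k : det3 (v i) (v j) (v k) != 0 -> GRing.lreg (det3 (vq i) (vq j) (vq k)).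
Proof. by move=> D0; apply/mulfI; rewrite det3_intr intr_eq0. Qed.

Definition free_on S :=
  forall lam, supported lam S -> comb lam = 0 -> forall t, lam t = 0.

Lemma free_on_coef S lam mu : free_on S -> supported lam S -> supported mu S ->
  comb lam = comb mu -> lam =1 mu.
Proof.
move=> freeS lamS muS eq_comb t; apply/eqP; rewrite -subr_eq0; apply/eqP.
apply: (freeS (fun u => lam u - mu u)) => [u uS|].
  by rewrite lamS ?muS ?subrr.
suff -> : comb (fun u => lam u - mu u) = comb lam - comb mu by rewrite eq_comb subrr.
by rewrite /comb -sumrB; apply: eq_bigr => u _; rewrite scalerBl.
Qed.

Lemma in_cone_face S T lam x : free_on S -> T \subset S -> supported lam S ->
  x = comb lam -> in_cone v T x -> forall t, lam t != 0 -> t \in T.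
Proof.
move=> freeS sTS lamS -> [mu [_ [muT eq_comb]]] t.
have muS : supported mu S by move=> u uS; apply: muT; apply: contra uS; apply: (subsetP sTS).
by rewrite (free_on_coef freeS lamS muS eq_comb); apply: contraNT => /muT ->.
Qed.

Lemma det3_distinct i j k : det3 (v i) (v j) (v k) != 0 -> [/\ i != j, i != k & j != k].
Proof.
by move=> D0; split; apply: contraNneq D0 => ->; apply/eqP; rewrite /det3; ring.
Qed.

Lemma free_on3 i j k : det3 (v i) (v j) (v k) != 0 -> free_on [set i; j; k].
Proof.
move=> D0 lam lamS comb0.
have [ij ik jk] := det3_distinct D0.
have lin0 s : lam i * vq i s + lam j * vq j s + lam k * vq k s = 0.
  rewrite -(@sum_set3 _ _ (fun t => lam t * vq t s) _ _ _ ij ik jk) => [|t /lamS ->].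
    by rewrite -combE comb0 mxE.
  by rewrite mul0r.
have [li lj lk] := det3_indep (lreg_det3 D0) lin0.
move=> t; case: (boolP (t \in [set i; j; k])); last exact: lamS.
by rewrite !inE => /orP[/orP[]|] /eqP ->.
Qed.

(* The Cramer coordinates of [x] in the basis [v p, v q, v r] are [det3 _ _ _ / D];
   multiplying by [D] instead of dividing keeps the hypotheses polynomial. *)
Lemma in_cone3_cramer p q r x : det3 (v p) (v q) (v r) != 0 ->
  0 <= det3 (vq p) (vq q) (vq r) * det3 (x^~ 0) (vq q) (vq r) ->
  0 <= det3 (vq p) (vq q) (vq r) * det3 (vq p) (x^~ 0) (vq r) ->
  0 <= det3 (vq p) (vq q) (vq r) * det3 (vq p) (vq q) (x^~ 0) ->
  in_cone v [set p; q; r] x.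
Proof.
move=> D0int; set D := det3 (vq p) (vq q) (vq r) => xp xq xr.
have D0 : D != 0 by rewrite /D det3_intr intr_eq0.
have coef_ge0 y : 0 <= D * y -> 0 <= y / D.
  by move=> Dy; rewrite (_ : y / D = D * y / D ^+ 2) ?divr_ge0 ?sqr_ge0 //; field.
have [pq pr qr] := det3_distinct D0int.
pose lam t := if t == p then det3 (x^~ 0) (vq q) (vq r) / D
  else if t == q then det3 (vq p) (x^~ 0) (vq r) / D
  else if t == r then det3 (vq p) (vq q) (x^~ 0) / D else 0.
have lamS : supported lam [set p; q; r].
  by move=> t; rewrite !inE !negb_or /lam => /andP[/andP[/negbTE-> /negbTE->] /negbTE->].
exists lam; split=> [t|]; first by rewrite /lam; do !case: ifP => _; rewrite ?coef_ge0.
split=> //; apply/matrixP => s o; rewrite (ord1 o) combE.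
rewrite (sum_set3 pq pr qr) => [|t /lamS ->]; last by rewrite mul0r.
rewrite /lam eqxx eq_sym (negbTE pq) eqxx eq_sym (negbTE pr) eq_sym (negbTE qr) eqxx.
exact: cramer3.
Qed.

Lemma dot3_comb (m : 'I_3 -> int) lam :
  dot3 (intr \o m) (comb lam ^~ 0) = \sum_t lam t * (dot3 m (v t))%:~R.
Proof.
rewrite /dot3 /= !combE !mulr_sumr -!big_split /=; apply: eq_bigr => t _.
by rewrite /vq /= !(rmorphD, rmorphM) /=; ring.
Qed.

Lemma in_cone_sep c d (m : 'I_3 -> int) :
  (forall t, t \in c -> (0 <= dot3 m (v t)) && ((dot3 m (v t) == 0) ==> (t \in d))) ->
  (forall t, t \in d -> dot3 m (v t) <= 0) ->
  forall x, in_cone v c x -> in_cone v d x -> in_cone v (c :&: d) x.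
Proof.
move=> mc md x [lam [lam0 [lamc ->]]] [mu [mu0 [mud eq_comb]]].
have lam_ge0 t : 0 <= lam t * (dot3 m (v t))%:~R.
  case: (boolP (t \in c)) => [/mc/andP[m0 _]|/lamc->]; last by rewrite mul0r.
  by rewrite mulr_ge0 ?ler0z.
have mu_le0 t : mu t * (dot3 m (v t))%:~R <= 0.
  case: (boolP (t \in d)) => [/md m0|/mud->]; last by rewrite mul0r.
  by rewrite mulr_ge0_le0 ?lerz0.
have sum0 : \sum_t lam t * (dot3 m (v t))%:~R = 0.
  have eq_lm : comb lam = comb mu := eq_comb.
  apply/eqP; rewrite eq_le sumr_ge0 // andbT -dot3_comb eq_lm dot3_comb.
  exact: sumr_le0.
exists lam; split=> //; split=> // t; rewrite inE negb_and => /orP[/lamc //|td].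
case: (boolP (t \in c)) => [tc|/lamc //]; have /andP[_ m0d] := mc t tc.
have /eqP := psumr_eq0P (fun u _ => lam_ge0 u) sum0 (i := t) isT.
by rewrite mulf_eq0 intr_eq0 => /orP[/eqP //|/(implyP m0d)]; rewrite (negbTE td).
Qed.

Lemma rank_rayMatrix p q r : det3 (v p) (v q) (v r) != 0 -> \rank (rayMatrix v) = 3%N.
Proof.
move=> D0; apply/eqP; rewrite eqn_leq rank_leq_row /=.
pose P : 'M[rat]_(N, 3) := \matrix_(t, s) ((t == tri p q r s)%:R).
have PE : rayMatrix v *m P = \matrix_(s, s') vq (tri p q r s') s.
  apply/matrixP => s s'; rewrite !mxE (bigD1 (tri p q r s')) //= !mxE eqxx mulr1.
  by rewrite big1 ?addr0 // => t /negbTE tn; rewrite !mxE tn mulr0.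
apply: leq_trans (mxrankM_maxl _ P).
by rewrite PE mxrank_unit // unitmxE unitfE det3_cols det3_intr intr_eq0.
Qed.

Definition wall_relation k l i j (al be : rat) :=
  vecQ v k + vecQ v l + al *: vecQ v i + be *: vecQ v j = 0.

Lemma wall_relationP k l i j al be : wall_relation k l i j al be <->
  (forall s, vq k s + vq l s + al * vq i s + be * vq j s = 0).
Proof.
split=> [rel s|rel]; last by apply/matrixP => s o; rewrite (ord1 o) !mxE rel.
by have := congr1 (fun y : 'cV_3 => y s 0) rel; rewrite !mxE.
Qed.

Lemma wall_relation_notin i j k l al be : det3 (v i) (v j) (v k) != 0 ->
  wall_relation k l i j al be -> l \notin [set i; j; k].
Proof.
move=> /lreg_det3 regD /wall_relationP rel; rewrite !inE; apply/negP => /orP[/orP[]|] /eqP eq_l;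
  subst l.
- suff /(det3_indep regD)[_ _ /eqP] : forall s, (1 + al) * vq i s + be * vq j s + 1 * vq k s = 0.
    by rewrite oner_eq0.
  by move=> s; rewrite -(rel s); ring.
- suff /(det3_indep regD)[_ _ /eqP] : forall s, al * vq i s + (1 + be) * vq j s + 1 * vq k s = 0.
    by rewrite oner_eq0.
  by move=> s; rewrite -(rel s); ring.
- suff /(det3_indep regD)[_ _ /eqP] : forall s, al * vq i s + be * vq j s + 2 * vq k s = 0.
    by rewrite pnatr_eq0.
  by move=> s; rewrite -(rel s); ring.
Qed.

Lemma principal_degree0 (a : 'I_N -> int) (m : 'I_3 -> int) k l i j al be :
  (forall t, a t = \sum_s m s * v t s) -> wall_relation k l i j al be ->
  (a k)%:~R + (a l)%:~R + al * (a i)%:~R + be * (a j)%:~R = 0 :> rat.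
Proof.
move=> am /wall_relationP rel.
transitivity (\sum_s (m s)%:~R * (vq k s + vq l s + al * vq i s + be * vq j s)).
  by rewrite !am !sum3 /vq /= !(rmorphD, rmorphM) /=; ring.
by rewrite big1 // => s _; rewrite rel mulr0.
Qed.

End Cones.

Lemma nef_wall_int N (v : 'I_N -> 'I_3 -> int) C a i j k l (al be : int) :
  nef v C a -> [set i; j; k] \in C -> [set i; j; l] \in C -> uniq [:: i; j; k; l] ->
  (forall s, v k s + v l s + al * v i s + be * v j s = 0) ->
  0 <= a k + a l + al * a i + be * a j.
Proof.
move=> nef_a ijkC ijlC; rewrite /= !inE !negb_or -!andbA => /and4P[ij ik il /and4P[jk jl kl _]] rel.
rewrite -(ler0z rat) !(rmorphD, rmorphM) /=.
apply: (nef_a _ _ ijkC ijlC i j k l); rewrite ?inE ?eqxx ?orbT //.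
- by rewrite !negb_or eq_sym ik eq_sym jk kl.
- by rewrite !negb_or eq_sym il eq_sym jl eq_sym kl.
by apply/wall_relationP => s; rewrite /vq /= -!intrM -!intrD rel.
Qed.

(** * The base fan *)

(* Matching on [nat_of_ord] rather than [val] keeps [vec3] reducible by [cbv]. *)
Definition vec3 (p : int * int * int) (s : 'I_3) : int :=
  match nat_of_ord s with 0 => p.1.1 | 1 => p.1.2 | _ => p.2 end.

Lemma vec3_inj : injective vec3.
Proof.
move=> [[a b] c] [[a' b'] c'] eq_v.
by congr (_, _, _);
  [move/(congr1 (@^~ r0)): eq_v|move/(congr1 (@^~ r1)): eq_v|move/(congr1 (@^~ r2)): eq_v].
Qed.

Definition o0 : 'I_8 := @Ordinal 8 0 isT.  Definition o1 : 'I_8 := @Ordinal 8 1 isT.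
Definition o2 : 'I_8 := @Ordinal 8 2 isT.  Definition o3 : 'I_8 := @Ordinal 8 3 isT.
Definition o4 : 'I_8 := @Ordinal 8 4 isT.  Definition o5 : 'I_8 := @Ordinal 8 5 isT.
Definition o6 : 'I_8 := @Ordinal 8 6 isT.  Definition o7 : 'I_8 := @Ordinal 8 7 isT.

Lemma ord8P (P : 'I_8 -> Prop) :
  P o0 -> P o1 -> P o2 -> P o3 -> P o4 -> P o5 -> P o6 -> P o7 -> forall t, P t.
Proof.
move=> P0 P1 P2 P3 P4 P5 P6 P7 [[|[|[|[|[|[|[|[|//]]]]]]]] lt_t8];
  by rewrite (bool_irrelevance lt_t8 isT).
Qed.

Local Notation cone8 := ('I_8 * 'I_8 * 'I_8)%type.
Local Notation wall8 := ('I_8 * 'I_8 * 'I_8 * 'I_8 * int * int)%type.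

Definition ords8 : seq 'I_8 := [:: o0; o1; o2; o3; o4; o5; o6; o7].

Lemma mem_ords8 t : t \in ords8.
Proof. by move: t; apply: ord8P. Qed.

Definition rays0 : seq (int * int * int) :=
  [:: (-1, 2, 0); (-1, 1, -1); (0, -1, -1); (2, -1, 2);
      (0, -1, 0); (-1, 1, 0); (1, -1, 1); (0, 2, 1)].

Definition v0 (t : 'I_8) : 'I_3 -> int := vec3 (nth 0 rays0 t).

Definition cone_of (p : cone8) : {set 'I_8} := [set p.1.1; p.1.2; p.2].

Definition cones0 : seq cone8 :=
  [:: (o0, o1, o5); (o0, o1, o7); (o0, o5, o7); (o1, o2, o3); (o1, o2, o5); (o1, o3, o7);
      (o2, o3, o6); (o2, o4, o5); (o2, o4, o6); (o3, o6, o7); (o4, o5, o7); (o4, o6, o7)].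

Definition cone_rays (p : cone8) : seq 'I_8 := [:: p.1.1; p.1.2; p.2].

Lemma mem_cone_of t p : (t \in cone_of p) = (t \in cone_rays p).
Proof. by rewrite !inE orbA. Qed.

Definition C0 : {set {set 'I_8}} := [set:: map cone_of cones0].

Lemma cone_of_C0 p : p \in cones0 -> cone_of p \in C0.
Proof. by move=> pC; rewrite inE map_f. Qed.

Lemma C0P c : c \in C0 -> exists2 p, p \in cones0 & c = cone_of p.
Proof. by rewrite inE => /mapP. Qed.

Lemma v0_inj : injective v0.
Proof.
move=> t t' /vec3_inj /eqP; rewrite nth_uniq //; first by move/eqP/val_inj.
all: exact: ltn_ord.
Qed.

Lemma v0_smooth c : c \in C0 -> exists i j k : 'I_8,
  c = [set i; j; k] /\ (\det (mx3 v0 i j k) = 1 \/ \det (mx3 v0 i j k) = -1).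
Proof.
have unimod : all (fun p => let d := det3 (v0 p.1.1) (v0 p.1.2) (v0 p.2) in
  (d == 1) || (d == -1)) cones0 by [].
move=> /C0P[p /(allP unimod) /= unimod_p ->]; exists p.1.1, p.1.2, p.2; split=> //.
by rewrite det3_cols; case/orP: unimod_p => /eqP ->; [left|right].
Qed.

Lemma v0_rays t : exists c, c \in C0 /\ t \in c.
Proof.
have cover : all (fun t => has (fun p => t \in cone_rays p) cones0) ords8.
  by vm_compute.
have /hasP[p pC tp] := allP cover t (mem_ords8 t).
by exists (cone_of p); rewrite mem_cone_of cone_of_C0.
Qed.

Definition cross3 (a b : int * int * int) : int * int * int :=
  (a.1.2 * b.2 - a.2 * b.1.2, a.2 * b.1.1 - a.1.1 * b.2, a.1.1 * b.1.2 - a.1.2 * b.1.1).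

Definition separates (m : 'I_3 -> int) (p q : cone8) : bool :=
  all (fun t => (t \in cone_rays p) ==>
         (0 <= dot3 m (v0 t)) && ((dot3 m (v0 t) == 0) ==> (t \in cone_rays q))) ords8
  && all (fun t => (t \in cone_rays q) ==> (dot3 m (v0 t) <= 0)) ords8.

(* A separating functional for each pair of cones is found among the sums of two
   normals of planes spanned by rays; [find] is used because [has] does not
   short-circuit under [vm_compute]. *)
Lemma v0_fan c c' : c \in C0 -> c' \in C0 -> forall x,
  in_cone v0 c x -> in_cone v0 c' x -> in_cone v0 (c :&: c') x.
Proof.
pose normals := undup [seq cross3 a b | a <- rays0, b <- rays0].
pose cands := [seq (m.1.1 + m'.1.1, m.1.2 + m'.1.2, m.2 + m'.2) | m <- normals, m' <- normals].
have sep : all (fun p => all (fun q =>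
  find (fun m => separates (vec3 m) p q) cands < size cands) cones0)%N cones0.
  by vm_compute.
move=> /C0P[p pC ->] /C0P[q qC ->].
have /allP/(_ q qC) := allP sep p pC; rewrite -has_find => /hasP[m _ /andP[/allP mp /allP mq]].
apply: (in_cone_sep (m := vec3 m)) => t; rewrite !mem_cone_of => tc.
  exact: implyP (mp t (mem_ords8 t)) tc.
exact: implyP (mq t (mem_ords8 t)) tc.
Qed.

Inductive ctree := Leaf of cone8 | Node of int * int * int & ctree & ctree.

Fixpoint select (T : ctree) (x : 'cV[rat]_3) : cone8 :=
  match T with
  | Leaf p => p
  | Node m T1 T2 => if 0 <= dot3 (intr \o vec3 m) (x^~ 0) then select T1 x else select T2 x
  end.

Fixpoint leaves (T : ctree) : seq cone8 :=
  match T with Leaf p => [:: p] | Node _ T1 T2 => leaves T1 ++ leaves T2 end.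

Lemma select_leaves T x : select T x \in leaves T.
Proof.
elim: T => [p|m T1 IH1 T2 IH2] /=; first by rewrite inE.
by rewrite mem_cat; case: ifP => _; rewrite ?IH1 ?IH2 ?orbT.
Qed.

(* Every node tests the sign of a linear form; along each path the tests force
   the Cramer coordinates of [x] in the leaf cone to be nonnegative. *)
Definition tree0 : ctree :=
  Node (-1, 0, 0)
    (Node (0, 0, -1)
      (Node (-2, -1, 1)
        (Node (1, 1, 0)
          (Leaf (o0, o1, o5))
          (Node (1, 1, -1) (Leaf (o1, o2, o5)) (Leaf (o2, o4, o5))))
        (Node (-3, -1, 2)
          (Leaf (o0, o1, o7))
          (Node (1, 0, -1) (Leaf (o1, o2, o3)) (Leaf (o1, o3, o7)))))
      (Node (-3, -1, 2)
        (Node (2, 1, -2)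
          (Leaf (o0, o1, o7))
          (Node (1, 1, -2) (Leaf (o0, o5, o7)) (Leaf (o4, o5, o7))))
        (Leaf (o1, o3, o7))))
    (Node (1, 0, -1)
      (Node (-2, -1, 1)
        (Leaf (o2, o4, o6))
        (Node (3, 2, -2) (Leaf (o1, o2, o3)) (Leaf (o2, o3, o6))))
      (Node (-3, -1, 2)
        (Leaf (o4, o6, o7))
        (Node (5, 2, -4) (Leaf (o1, o3, o7)) (Leaf (o3, o6, o7))))).

Lemma v0_complete x : exists c, c \in C0 /\ in_cone v0 c x.
Proof.
have leaves0 : all (mem cones0) (leaves tree0) by vm_compute.
exists (cone_of (select tree0 x)); split.
  by apply: cone_of_C0; apply: (allP leaves0); apply: select_leaves.
rewrite /tree0; cbn [select]; do !case: ifP => ?.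
all: apply: in_cone3_cramer; first by [].
(* [simpl] would unfold the arithmetic of [rat]: only the data is reduced. *)
all: cbv beta iota delta [det3 dot3 vq v0 comp vec3 nth rays0 fst snd nat_of_ord
  r0 r1 r2 o0 o1 o2 o3 o4 o5 o6 o7] in *; lra.
Qed.

Lemma cone_in_C0 p : has (fun q => perm_eq (cone_rays p) (cone_rays q)) cones0 -> cone_of p \in C0.
Proof. by case/hasP=> q qC /set3_perm eq_pq; rewrite /cone_of eq_pq cone_of_C0. Qed.

(* [(i, j, k, l, al, be)] is the wall spanned by [v0 i], [v0 j] between the cones
   [{i, j, k}] and [{i, j, l}], with [v0 k + v0 l + al v0 i + be v0 j = 0]. *)
Definition walls0 : seq wall8 :=
  [:: (o0, o1, o5, o7, -2, 1); (o0, o5, o1, o7, -2, 1); (o1, o5, o0, o2, -1, 0);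
      (o0, o7, o1, o5, -2, 1); (o1, o7, o0, o3, 1, -1); (o5, o7, o0, o4, -1, 0);
      (o1, o2, o3, o5, 1, 1); (o1, o3, o2, o7, -2, -1); (o2, o3, o1, o6, 0, 0);
      (o2, o5, o1, o4, -1, -1); (o3, o7, o1, o6, 0, 0); (o2, o6, o3, o4, 0, -2);
      (o3, o6, o2, o7, -1, 2); (o2, o4, o5, o6, 1, -1); (o4, o5, o2, o7, 1, 0);
      (o4, o6, o2, o7, 1, 0); (o6, o7, o3, o4, -2, 0); (o4, o7, o5, o6, -2, -1)].

Definition wall_degree (a : 'I_8 -> int) (w : wall8) : int :=
  let: (i, j, k, l, al, be) := w in a k + a l + al * a i + be * a j.

Definition wall0_ok (w : wall8) : bool :=
  let: (i, j, k, l, al, be) := w in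
  [&& has (fun q => perm_eq [:: i; j; k] (cone_rays q)) cones0,
      has (fun q => perm_eq [:: i; j; l] (cone_rays q)) cones0,
      uniq [:: i; j; k; l] &
      all (fun s => v0 k s + v0 l s + al * v0 i s + be * v0 j s == 0) [:: r0; r1; r2]].

Lemma v0_nef_walls a : nef v0 C0 a -> all (fun w => 0 <= wall_degree a w) walls0.
Proof.
move=> nef_a; have walls_ok : all wall0_ok walls0 by vm_compute.
apply/allP => -[[[[[i j] k] l] al] be] /(allP walls_ok) /and4P[ijk ijl uniq_ijkl rel].
apply: (nef_wall_int nef_a (cone_in_C0 (p := (i, j, k)) ijk) (cone_in_C0 (p := (i, j, l)) ijl)
  uniq_ijkl).
by move: rel => /and4P[? ? ? _]; apply: ord3P; apply/eqP.
Qed.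

Lemma v0_nef_trivial a : nef v0 C0 a -> trivial_bundle v0 a.
Proof.
move=> /v0_nef_walls /= walls.
(* The character that agrees with [a] on the basis [v0 o0, v0 o1, v0 o5]. *)
exists (vec3 (a o0 - 2 * a o5, a o0 - a o5, a o5 - a o1)).
by apply: ord8P; rewrite sum3 /v0 /vec3 /=; lia.
Qed.

(** * Star subdivision of a unimodular cone *)

(* A unimodular maximal cone [{i, j, k}] with a neighbour [{i, j, l}]: this is
   what pins down the coefficient of the new ray in [nef_star_trivial], and the
   star subdivision produces such a pair again. *)
Definition unimodular_wall N (v : 'I_N -> 'I_3 -> int) (C : {set {set 'I_N}}) : Prop :=
  exists (i j k l : 'I_N) (al be : rat),
    [/\ [set i; j; k] \in C, [set i; j; l] \in C,
        \det (mx3 v i j k) = 1 \/ \det (mx3 v i j k) = -1 & wall_relation v k l i j al be].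

Section StarSubdivision.
Variables (N : nat) (v : 'I_N -> 'I_3 -> int) (C : {set {set 'I_N}}) (i j k : 'I_N).
Hypotheses (fanC : smooth_complete_fan v C) (sigC : [set i; j; k] \in C).
Hypothesis sig_unimod : \det (mx3 v i j k) = 1 \/ \det (mx3 v i j k) = -1.

Local Notation sig := [set i; j; k].
Local Notation w := (@lift N.+1 ord_max).
Local Notation rho := (@ord_max N).

(* The new ray [rho = v i + v j + v k] gets the index [ord_max]; the old ray [t]
   becomes [lift ord_max t]. *)
Definition star_rays (t : 'I_N.+1) : 'I_3 -> int :=
  if unlift ord_max t is Some u then v u else fun s => \sum_(u in sig) v u s.

Definition star_cone (z : 'I_N) : {set 'I_N.+1} := rho |: w @: (sig :\ z).

Definition star_fan : {set {set 'I_N.+1}} :=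
  [set w @: d | d : {set 'I_N} in C :\ sig] :|: [set star_cone z | z in sig].

Local Notation v' := star_rays.

Lemma det_sig : det3 (v i) (v j) (v k) != 0.
Proof. by rewrite -det_mx3; case: sig_unimod => ->. Qed.

Lemma free_sig : free_on v sig.
Proof. exact: free_on3 det_sig. Qed.

Lemma card_sig : #|sig| = 3%N.
Proof. by have [ij ik jk] := det3_distinct det_sig; rewrite card_set3. Qed.

Lemma sig_set3 x y z : x \in sig -> y \in sig -> z \in sig ->
  x != y -> x != z -> y != z -> sig = [set x; y; z].
Proof.
move=> xS yS zS xy xz yz; apply/esym/eqP; rewrite eqEcard card_sig card_set3 // leqnn andbT.
by apply/subsetP => t; rewrite !inE => /orP[/orP[]|] /eqP ->; move: xS yS zS; rewrite !inE.
Qed.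

Lemma sub_sig d : d \in C -> sig \subset d -> d = sig.
Proof.
case: fanC => _ smooth _ _ _ dC sub; have [a [b [c [Ed _]]]] := smooth d dC.
apply/esym/eqP; rewrite eqEcard sub card_sig Ed.
by rewrite set3E !cardsU1 cards1; case: (_ \notin _); case: (_ \notin _).
Qed.

Lemma star_rays_lift t : v' (w t) = v t.
Proof. by rewrite /star_rays liftK. Qed.

Lemma star_rays_rho x y z : sig = [set x; y; z] -> x != y -> x != z -> y != z ->
  forall s, v' rho s = v x s + v y s + v z s.
Proof. by move=> Sxyz xy xz yz s; rewrite /star_rays unlift_none Sxyz big_set3. Qed.

Lemma vecQ_star_lift t : vecQ v' (w t) = vecQ v t.
Proof. by apply/matrixP => r c; rewrite !mxE star_rays_lift. Qed.

Lemma vq_star_lift t : vq v' (w t) = vq v t.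
Proof. by rewrite /vq star_rays_lift. Qed.

Lemma vq_star_rho x y z : sig = [set x; y; z] -> x != y -> x != z -> y != z ->
  forall s, vq v' rho s = vq v x s + vq v y s + vq v z s.
Proof. by move=> Sxyz xy xz yz s; rewrite /vq /= (star_rays_rho Sxyz) // !rmorphD. Qed.

Lemma lift_neq_rho t : (w t == rho) = false.
Proof. by apply/negbTE; rewrite eq_sym neq_lift. Qed.

Lemma mem_lift (S : {set 'I_N}) t : (w t \in w @: S) = (t \in S).
Proof. exact: (mem_imset _ _ lift_inj). Qed.

Lemma rho_notin_lift (S : {set 'I_N}) : rho \notin w @: S.
Proof. by apply/imsetP => -[t _ /eqP]; rewrite eq_sym lift_neq_rho. Qed.

Lemma mem_star_cone_lift z t : (w t \in star_cone z) = (t \in sig) && (t != z).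
Proof. by rewrite in_setU1 lift_neq_rho mem_lift in_setD1 andbC. Qed.

Lemma rho_star_cone z : rho \in star_cone z.
Proof. exact: setU11. Qed.

Lemma sum_lift (M : nmodType) (F : 'I_N.+1 -> M) : \sum_t F t = \sum_t F (w t) + F rho.
Proof.
rewrite big_ord_recr /=; congr (_ + _); apply: eq_bigr => t _; congr F.
by apply: val_inj; rewrite /= /bump leqNgt ltn_ord.
Qed.

Lemma in_cone_lift (S : {set 'I_N}) x : in_cone v' (w @: S) x <-> in_cone v S x.
Proof.
split=> [[mu [mu0 [muS ->]]]|[lam [lam0 [lamS ->]]]].
  exists (mu \o w); split=> [t|]; first exact: mu0.
  split=> [t tS|]; first by apply: muS; rewrite mem_lift.
  rewrite sum_lift (muS rho (rho_notin_lift S)) scale0r addr0.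
  by apply: eq_bigr => t _; rewrite vecQ_star_lift.
exists (fun t => if unlift ord_max t is Some u then lam u else 0); split=> [t|].
  by case: (unlift _ _).
split=> [t|]; first by case: (unliftP ord_max t) => [u ->|->] //; rewrite mem_lift => /lamS.
rewrite sum_lift unlift_none scale0r addr0.
by apply: eq_bigr => t _; rewrite liftK vecQ_star_lift.
Qed.

(* The coefficients of [comb v' mu] on the old rays, with [rho] expanded. *)
Definition push (mu : 'I_N.+1 -> rat) (t : 'I_N) : rat := mu (w t) + (t \in sig)%:R * mu rho.

Lemma comb_push mu : comb v' mu = comb v (push mu).
Proof.
apply/matrixP => s o; rewrite (ord1 o) !combE sum_lift /push.
under [RHS]eq_bigr do rewrite mulrDl.
rewrite big_split /=; congr (_ + _); first by apply: eq_bigr => t _; rewrite /vq star_rays_lift.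
rewrite /vq /star_rays unlift_none /= rmorph_sum mulr_sumr big_mkcond /=.
by apply: eq_bigr => t _; case: (t \in sig); rewrite ?mul1r ?mul0r // mulrC.
Qed.

Lemma push_ge0 mu : (forall t, 0 <= mu t) -> forall t, 0 <= push mu t.
Proof. by move=> mu0 t; rewrite addr_ge0 ?mulr_ge0. Qed.

Lemma push_supported mu z : supported mu (star_cone z) -> supported (push mu) sig.
Proof.
move=> muS t tS; rewrite /push (negbTE tS) mul0r addr0.
by apply: muS; rewrite mem_star_cone_lift (negbTE tS).
Qed.

Lemma star_fan_old_new d z x : d \in C -> d != sig -> z \in sig ->
  in_cone v' (w @: d) x -> in_cone v' (star_cone z) x -> in_cone v' (w @: d :&: star_cone z) x.
Proof.
case: fanC => _ _ _ fan _ dC dsig zS /in_cone_lift xd [mu [mu0 [muS xE]]].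
have pushS := push_supported muS.
have xE' : x = comb v (push mu) := etrans xE (comb_push mu).
have xsig : in_cone v sig x by exists (push mu); split; [exact: push_ge0|split].
have face := in_cone_face free_sig (subsetIr d sig) pushS xE' (fan d sig dC sigC _ xd xsig).
have mu_rho0 : mu rho = 0.
  (* otherwise all of [sig] has positive coefficients, so [sig \subset d] *)
  apply/eqP; apply: contraNT dsig => mu_rho; apply/eqP/sub_sig => //.
  apply/subsetP => t tS; have /face : push mu t != 0.
    by rewrite /push tS mul1r lt0r_neq0 // ltr_wpDl // lt_def mu_rho mu0.
  by rewrite inE => /andP[].
exists mu; split=> //; split=> // t'; rewrite inE negb_and.
case: (unliftP ord_max t') => [t ->|->] //; rewrite mem_lift => /orP[td|/muS //].
have /eqP : push mu t == 0 by apply: contraT => /face; rewrite inE (negbTE td).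
by rewrite /push mu_rho0 mulr0 addr0.
Qed.

Lemma star_fan_new_new z z' x : z \in sig -> z' \in sig ->
  in_cone v' (star_cone z) x -> in_cone v' (star_cone z') x ->
  in_cone v' (star_cone z :&: star_cone z') x.
Proof.
move=> zS z'S; have [<-|zz'] := eqVneq z z'; first by rewrite setIid.
move=> [mu [mu0 [muS ->]]] [mu' [mu0' [muS' eq_comb]]].
have eq_push := free_on_coef free_sig (push_supported muS) (push_supported muS')
  (etrans (esym (comb_push mu)) (etrans eq_comb (comb_push mu'))).
have mu_z : mu (w z) = 0 by apply: muS; rewrite mem_star_cone_lift eqxx andbF.
have mu'_z' : mu' (w z') = 0 by apply: muS'; rewrite mem_star_cone_lift eqxx andbF.
have := eq_push z; have := eq_push z'; rewrite /push zS z'S !mul1r mu_z mu'_z' => at_z' at_z.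
(* comparing coefficients at [z] and [z'] gives [mu (w z') = - mu' (w z)] *)
have mu_z' : mu (w z') = 0 by have := mu0 (w z'); have := mu0' (w z); lra.
exists mu; split=> //; split=> // t'; rewrite inE negb_and => /orP[/muS //|].
case: (unliftP ord_max t') => [t ->|->]; last by rewrite rho_star_cone.
rewrite mem_star_cone_lift negb_and negbK => /orP[tS|/eqP -> //].
by apply: muS; rewrite mem_star_cone_lift (negbTE tS).
Qed.

Lemma star_fanP c : c \in star_fan ->
  (exists2 d, d \in C :\ sig & c = w @: d) \/ (exists2 z, z \in sig & c = star_cone z).
Proof. by rewrite inE => /orP[/imsetP|/imsetP]; [left|right]. Qed.

Lemma star_fan_fan c c' : c \in star_fan -> c' \in star_fan -> forall x,
  in_cone v' c x -> in_cone v' c' x -> in_cone v' (c :&: c') x.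
Proof.
case: fanC => _ _ _ fan _.
move=> /star_fanP[[d /setD1P[dsig dC] ->]|[z zS ->]]
  /star_fanP[[d' /setD1P[dsig' dC'] ->]|[z' z'S ->]] x.
- rewrite -imsetI => [/in_cone_lift xd /in_cone_lift xd'|]; last by move=> ? ? ? ?; apply: lift_inj.
  exact/in_cone_lift/fan.
- exact: star_fan_old_new.
- by rewrite setIC => xz xd'; apply: star_fan_old_new.
- exact: star_fan_new_new.
Qed.

Lemma star_fan_complete x : exists c, c \in star_fan /\ in_cone v' c x.
Proof.
case: fanC => _ _ _ _ complete; have [c [cC xc]] := complete x.
have [csig|csig] := eqVneq c sig; last first.
  by exists (w @: c); split; [rewrite inE imset_f // !inE csig|exact/in_cone_lift].
move: xc; rewrite csig => -[lam [lam0 [lamS ->]]].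
have iS : i \in sig by rewrite !inE eqxx.
have [z zS zmin] := arg_minP lam iS; have {}zS : z \in sig := zS.
exists (star_cone z); split; first by rewrite inE imset_f ?orbT.
(* move the smallest coordinate [lam z] of [x] onto [rho] *)
pose mu t' := if unlift ord_max t' is Some t then lam t - (t \in sig)%:R * lam z else lam z.
exists mu; split=> [t'|].
  case: (unliftP ord_max t') => [t ->|->]; rewrite /mu ?liftK ?unlift_none //.
  by case: (boolP (t \in sig)) => tS; rewrite ?mul1r ?mul0r ?subr0 ?subr_ge0 ?zmin.
split=> [t'|].
  case: (unliftP ord_max t') => [t ->|->]; last by rewrite rho_star_cone.
  rewrite mem_star_cone_lift negb_and negbK /mu liftK => /orP[tS|/eqP ->].
    by rewrite lamS // (negbTE tS) mul0r subr0.
  by rewrite zS mul1r subrr.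
rewrite [RHS]comb_push; apply: eq_bigr => t _; congr (_ *: _).
by rewrite /push /mu liftK unlift_none subrK.
Qed.

Lemma star_cone_set3 x y z : sig = [set x; y; z] -> x != y -> x != z -> y != z ->
  star_cone z = [set w x; w y; rho].
Proof.
move=> Sxyz xy xz yz; apply/setP => t'.
case: (unliftP ord_max t') => [t ->|->]; last by rewrite rho_star_cone !inE eqxx orbT.
rewrite mem_star_cone_lift Sxyz !inE !(inj_eq lift_inj) lift_neq_rho orbF.
by case: (eqVneq t z) => [->|]; rewrite ?andbF ?andbT ?orbF // !(eq_sym z) (negbTE xz) (negbTE yz).
Qed.

Lemma star_fan_smooth c : c \in star_fan -> exists a b e : 'I_N.+1,
  c = [set a; b; e] /\ (\det (mx3 v' a b e) = 1 \/ \det (mx3 v' a b e) = -1).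
Proof.
case: fanC => _ smooth _ _ _; have [ij ik jk] := det3_distinct det_sig.
move=> /star_fanP[[d /setD1P[_ dC] ->]|[z zS ->]].
  have [a [b [e [-> unimod]]]] := smooth d dC; exists (w a), (w b), (w e).
  by rewrite set3E !imsetU1 imset_set1 -set3E det_mx3 !star_rays_lift -det_mx3.
have rho_ijk := star_rays_rho (erefl sig) ij ik jk.
have unimod : det3 (v i) (v j) (v k) = 1 \/ det3 (v i) (v j) (v k) = -1 by rewrite -det_mx3.
have mem_sig : [/\ i \in sig, j \in sig & k \in sig] by rewrite !inE !eqxx !orbT.
case: mem_sig => iS jS kS.
move: zS; rewrite !inE => /orP[/orP[]|] /eqP ->.
- have [ji ki] : j != i /\ k != i by rewrite !(eq_sym _ i).
  have Sjki := sig_set3 jS kS iS jk ji ki.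
  exists (w j), (w k), rho; rewrite (star_cone_set3 Sjki jk ji ki).
  split=> //; rewrite det_mx3 (_ : det3 _ _ _ = det3 (v i) (v j) (v k)) //.
  by rewrite /det3 !star_rays_lift !rho_ijk; ring.
- have kj : k != j by rewrite eq_sym.
  exists (w i), (w k), rho; rewrite (star_cone_set3 (sig_set3 iS kS jS ik ij kj) ik ij kj).
  split=> //; rewrite det_mx3 (_ : det3 _ _ _ = - det3 (v i) (v j) (v k)).
    by case: unimod => ->; [right|left].
  by rewrite /det3 !star_rays_lift !rho_ijk; ring.
- exists (w i), (w j), rho; rewrite (star_cone_set3 (erefl sig) ij ik jk).
  split=> //; rewrite det_mx3 (_ : det3 _ _ _ = det3 (v i) (v j) (v k)) //.
  by rewrite /det3 !star_rays_lift !rho_ijk; ring.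
Qed.

Lemma star_fan_rays t' : exists c, c \in star_fan /\ t' \in c.
Proof.
case: fanC => _ _ rays _ _; have [ij _ _] := det3_distinct det_sig.
have new z : z \in sig -> star_cone z \in star_fan by move=> zS; rewrite inE imset_f ?orbT.
have iS : i \in sig by rewrite !inE eqxx.
case: (unliftP ord_max t') => [t ->|->]; last by exists (star_cone i); rewrite new ?rho_star_cone.
have [c [cC tc]] := rays t; have [csig|csig] := eqVneq c sig; last first.
  by exists (w @: c); rewrite mem_lift inE imset_f // !inE csig.
pose z := if t == i then j else i.
have [zS tz] : z \in sig /\ t != z.
  by rewrite /z; case: eqVneq => [->|]; rewrite ?ij // !inE eqxx ?orbT.
by exists (star_cone z); rewrite new // mem_star_cone_lift -csig tc.
Qed.

Lemma star_rays_neq_rho t : v' (w t) <> v' rho.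
Proof.
case: fanC => _ _ rays fan _; rewrite star_rays_lift => vt.
pose lam u := (u \in sig)%:R : rat.
have lamS : supported lam sig by move=> u /negbTE uS; rewrite /lam uS.
have xE : vecQ v t = comb v lam.
  apply/matrixP => s o; rewrite (ord1 o) combE !mxE vt /star_rays unlift_none rmorph_sum.
  rewrite big_mkcond; apply: eq_bigr => u _.
  by rewrite /lam /vq; case: (u \in sig); rewrite ?mul1r ?mul0r.
have xsig : in_cone v sig (vecQ v t).
  by exists lam; split=> [u|]; [rewrite /lam ler0n|split].
have sub_of (T : {set 'I_N}) : T \subset sig -> in_cone v T (vecQ v t) -> sig \subset T.
  move=> sub xT; apply/subsetP => u uS; apply: (in_cone_face free_sig sub lamS xE xT).
  by rewrite /lam uS oner_eq0.
have [c [cC tc]] := rays t.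
have sigc : sig \subset c.
  have := sub_of _ (subsetIr c sig) (fan c sig cC sigC _ (in_cone_ray v tc) xsig).
  by move/subset_trans; apply; apply: subsetIl.
have tS : t \in sig by rewrite -(sub_sig cC sigc).
have tsig : [set t] \subset sig by rewrite sub1set.
have /subset_leq_card := sub_of _ tsig (in_cone_ray v (set11 t)).
by rewrite card_sig cards1.
Qed.

Lemma star_rays_inj : injective v'.
Proof.
case: fanC => inj _ _ _ _ x y.
case: (unliftP ord_max x) => [a ->|->]; case: (unliftP ord_max y) => [b ->|->] //.
- by rewrite !star_rays_lift => /inj ->.
- by move/star_rays_neq_rho.
- by move/esym/star_rays_neq_rho.
Qed.

Lemma star_fan_smooth_complete : smooth_complete_fan v' star_fan.
Proof.
split; [exact: star_rays_inj|exact: star_fan_smooth|exact: star_fan_rays|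
        exact: star_fan_fan|exact: star_fan_complete].
Qed.

Lemma star_picard : picard_number v' = (picard_number v).+1.
Proof.
have [ij ik jk] := det3_distinct det_sig.
have D' : det3 (v' (w i)) (v' (w j)) (v' rho) != 0.
  suff -> : det3 (v' (w i)) (v' (w j)) (v' rho) = det3 (v i) (v j) (v k) by exact: det_sig.
  by rewrite /det3 !star_rays_lift !(star_rays_rho (erefl sig) ij ik jk); ring.
have le3N : (3 <= N)%N by rewrite -card_sig -[X in (_ <= X)%N]card_ord max_card.
by rewrite /picard_number (rank_rayMatrix D') (rank_rayMatrix det_sig) subSn.
Qed.

(* The walls of the exceptional line [V(x, rho)] and of the strict transform of
   the curve [V(x, y)]. *)
Lemma nef_star_walls a' x y z c l0 (al0 be0 : rat) : nef v' star_fan a' ->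
  sig = [set x; y; z] -> x != y -> x != z -> y != z ->
  c \in C -> x \in c -> y \in c -> l0 \in c -> l0 \notin sig -> wall_relation v z l0 x y al0 be0 ->
  (a' rho)%:~R <= (a' (w x))%:~R + (a' (w y))%:~R + (a' (w z))%:~R :> rat /\
  0 <= (a' rho)%:~R + (a' (w l0))%:~R + (al0 - 1) * (a' (w x))%:~R + (be0 - 1) * (a' (w y))%:~R.
Proof.
move=> nef_a Sxyz xy xz yz cC xc yc lc lS /wall_relationP rel0.
have [yx zx zy] : [/\ y != x, z != x & z != y] by split; rewrite eq_sym.
have [xS yS zS] : [/\ x \in sig, y \in sig & z \in sig] by rewrite Sxyz !inE !eqxx !orbT.
have newC u : u \in sig -> star_cone u \in star_fan by move=> uS; rewrite inE imset_f ?orbT.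
have oldC : w @: c \in star_fan.
  by rewrite inE imset_f // !inE cC andbT; apply: contraNneq lS => <-.
have rho_xyz := vq_star_rho Sxyz xy xz yz.
split.
  suff : 0 <= (a' (w y))%:~R + (a' (w z))%:~R + 1 * (a' (w x))%:~R + (-1) * (a' rho)%:~R :> rat.
    by lra.
  apply: (nef_a _ _ (newC z zS) (newC y yS) (w x) rho (w y) (w z));
    rewrite ?mem_star_cone_lift ?rho_star_cone ?lift_neq_rho ?eqxx ?andbF
      ?xS ?yS ?zS ?xz ?yx ?zy //.
  by apply/wall_relationP => s; rewrite !vq_star_lift rho_xyz; ring.
apply: (nef_a _ _ (newC z zS) oldC (w x) (w y) rho (w l0));
  rewrite ?mem_star_cone_lift ?mem_lift ?rho_star_cone ?rho_notin_lift ?(inj_eq lift_inj)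
    ?xS ?yS ?xz ?yz ?xc ?yc ?lc ?xy ?(negbTE lS) //.
by apply/wall_relationP => s; rewrite !vq_star_lift rho_xyz -(rel0 s); ring.
Qed.

Lemma nef_star_down a' : nef v' star_fan a' -> nef v C (a' \o w).
Proof.
move=> nef_a c c' cC c'C x y z l0 xc xc' yc yc' xy zc zc' lc' lc al0 be0 rel0.
have ne_of (d : {set 'I_N}) u u' : u \in d -> u' \notin d -> u != u'.
  by move=> ud; apply: contraNneq => <-.
have [csig|csig] := eqVneq c sig; have [c'sig|c'sig] := eqVneq c' sig.
- by move: zc'; rewrite c'sig -csig zc.
- have [xz yz] := (ne_of _ _ _ xc' zc', ne_of _ _ _ yc' zc').
  have Sxyz : sig = [set x; y; z] by rewrite csig in xc yc zc; apply: sig_set3.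
  have lS : l0 \notin sig by rewrite -csig.
  have [w1 w2] := nef_star_walls nef_a Sxyz xy xz yz c'C xc' yc' lc' lS rel0.
  rewrite /=; lra.
- have [lx ly] := (ne_of _ _ _ xc lc, ne_of _ _ _ yc lc).
  have Sxyl : sig = [set x; y; l0] by rewrite c'sig in xc' yc' lc'; apply: sig_set3.
  have zS : z \notin sig by rewrite -c'sig.
  have rel0' : wall_relation v l0 z x y al0 be0.
    by move/wall_relationP: rel0 => rel0; apply/wall_relationP => s; rewrite -(rel0 s); ring.
  have [w1 w2] := nef_star_walls nef_a Sxyl xy lx ly cC xc yc zc zS rel0'.
  rewrite /=; lra.
- have oldC d : d \in C -> d != sig -> w @: d \in star_fan.
    by move=> dC dsig; rewrite inE imset_f // !inE dsig.
  apply: (nef_a _ _ (oldC c cC csig) (oldC c' c'C c'sig) (w x) (w y) (w z) (w l0));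
    rewrite ?mem_lift ?(inj_eq lift_inj) //.
  by rewrite !vecQ_star_lift.
Qed.

Variables (l : 'I_N) (al be : rat).
Hypotheses (sig'C : [set i; j; l] \in C) (rel : wall_relation v k l i j al be).

Lemma nef_star_trivial : (forall a, nef v C a -> trivial_bundle v a) ->
  forall a', nef v' star_fan a' -> trivial_bundle v' a'.
Proof.
move=> triv a' nef_a; have [m am] := triv _ (nef_star_down nef_a).
have [ij ik jk] := det3_distinct det_sig.
have [iS' jS' lS'] : [/\ i \in [set i; j; l], j \in [set i; j; l] & l \in [set i; j; l]].
  by rewrite !inE !eqxx !orbT.
have [w1 w2] := nef_star_walls nef_a (erefl sig) ij ik jk sig'C iS' jS' lS'
  (wall_relation_notin det_sig rel) rel.
have deg0 := principal_degree0 am rel; rewrite /= in deg0.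
have a_rho : a' rho = a' (w i) + a' (w j) + a' (w k).
  by apply/eqP; rewrite -(eqr_int rat) !rmorphD /=; apply/eqP; lra.
exists m => t'; case: (unliftP ord_max t') => [t ->|->]; first by rewrite star_rays_lift; apply: am.
rewrite a_rho !(am : forall t, a' (w t) = _) -!big_split /=; apply: eq_bigr => s _.
by rewrite (star_rays_rho (erefl sig) ij ik jk) !mulrDr.
Qed.

Lemma star_unimodular_wall : unimodular_wall v' star_fan.
Proof.
have [ij ik jk] := det3_distinct det_sig.
have lS := wall_relation_notin det_sig rel.
have rho_ijk := star_rays_rho (erefl sig) ij ik jk.
exists (w i), (w j), rho, (w l), (al - 1), (be - 1); split.
- by rewrite -(star_cone_set3 (erefl sig) ij ik jk) inE imset_f ?orbT // !inE eqxx orbT.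
- rewrite (_ : [set w i; w j; w l] = w @: [set i; j; l]); last first.
    by rewrite !set3E !imsetU1 imset_set1.
  rewrite inE imset_f // !inE sig'C andbT.
  by apply: contraNneq lS => <-; rewrite !inE eqxx orbT.
- suff -> : \det (mx3 v' (w i) (w j) rho) = \det (mx3 v i j k) by [].
  by rewrite !det_mx3 /det3 !star_rays_lift !rho_ijk; ring.
move/wall_relationP: rel => rel0; apply/wall_relationP => s.
by rewrite !vq_star_lift (vq_star_rho (erefl sig) ij ik jk) -(rel0 s); ring.
Qed.

End StarSubdivision.

(** * The induction *)

Definition nef_trivial_fan n N (v : 'I_N -> 'I_3 -> int) (C : {set {set 'I_N}}) : Prop :=
  [/\ smooth_complete_fan v C, picard_number v = n,
      forall a, nef v C a -> trivial_bundle v a & unimodular_wall v C].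

Lemma nef_trivial_fan_v0 : nef_trivial_fan 5 v0 C0.
Proof.
split.
- split; [exact: v0_inj|exact: v0_smooth|exact: v0_rays|exact: v0_fan|exact: v0_complete].
- by rewrite /picard_number (@rank_rayMatrix _ v0 o0 o1 o5).
- exact: v0_nef_trivial.
exists o0, o1, o5, o7, (-2)%:~R, 1%:~R; split.
- exact: (cone_of_C0 (p := (o0, o1, o5))).
- exact: (cone_of_C0 (p := (o0, o1, o7))).
- by left; rewrite det_mx3.
by apply/wall_relationP; apply: ord3P; rewrite /vq /= -!intrM -!intrD; apply/eqP; rewrite intr_eq0.
Qed.

Lemma nef_trivial_fan_star n N (v : 'I_N -> 'I_3 -> int) C :
  nef_trivial_fan n v C -> exists N' (v' : 'I_N' -> 'I_3 -> int) C', nef_trivial_fan n.+1 v' C'.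
Proof.
case=> fanC picard triv [i [j [k [l [al [be [sigC sig'C unimod rel]]]]]]].
exists N.+1, (star_rays v i j k), (star_fan C i j k); split.
- exact: star_fan_smooth_complete.
- by rewrite (star_picard unimod) picard.
- exact: (nef_star_trivial unimod sig'C rel triv).
- by apply: (star_unimodular_wall unimod sig'C rel).
Qed.

Lemma nef_trivial_fan_exists d :
  exists N (v : 'I_N -> 'I_3 -> int) C, nef_trivial_fan (5 + d) v C.
Proof.
elim: d => [|d [N [v [C /nef_trivial_fan_star]]]]; last by rewrite addnS.
by exists 8%N, v0, C0; exact: nef_trivial_fan_v0.
Qed.

Theorem mainTheorem5 :
  forall n : nat, (5 <= n)%N ->
  exists (N : nat) (v : 'I_N -> 'I_3 -> int) (C : {set {set 'I_N}}),
    smooth_complete_fan v C /\ picard_number v = n /\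
    (forall a : 'I_N -> int, nef v C a -> trivial_bundle v a).
Proof.
move=> n le5n; have [N [v [C [fanC picard triv _]]]] := nef_trivial_fan_exists (n - 5).
by exists N, v, C; rewrite picard subnKC.
Qed.
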